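(* Let $(X,\sigma,T)$ be as in the context and $\xi\in X_{eq}$. The following are equivalent: (1) every point of $\pi_{eq}^{-1}(\xi)$ separates the idempotents of $L$; (2) for each $x\in X$, $R^{\xi-\pi_{eq}(x)}_{\mathrm{ev}_x}\subset\mathcal R$; (3) for each $x\in\pi_{eq}^{-1}(\xi)$, $R^0_{\mathrm{ev}_x}\subset\mathcal R$.
   Context: $T$ abelian group acting continuously, minimally and non-distally by $\sigma$ on a compact Hausdorff space $X$. $E(X)$ is the Ellis semigroup (closure of $\{\sigma^t\}$ in $X^X$, pointwise topology). $\pi_{eq}:X\to X_{eq}$ is the maximal equicontinuous factor, $X_{eq}$ a compact abelian group with neutral element $0$. Fix a minimal idempotent $e$ and $L=E(X)e$; $L$ is a completely simple semigroup, so each $f\in L$ has a unique normal inverse $f^{-1}$ (with $ff^{-1}f=f$, $f^{-1}ff^{-1}=f^{-1}$, $ff^{-1}=f^{-1}f$); put $f^0=f^{-1}f$ (an idempotent with $f^0f=f$). Green's relation $\mathcal R$ on $L$: $(f_1,f_2)\in\mathcal R$ iff $f_1^0=f_2^0$. $J_L$ denotes the set of idempotents of $L$; a point $x\in X$ separates the idempotents of $L$ if $p\mapsto p(x)$ is injective on $J_L$. $\tilde\pi_{eq}:L\to X_{eq}$, $\tilde\pi_{eq}(f)=\pi_{eq}(f(x))-\pi_{eq}(x)$ (independent of $x$). For $x\in X$, $\zeta\in X_{eq}$: $R^\zeta_{\mathrm{ev}_x}=\{(f_1,f_2)\in L\times L: f_1(x)=f_2(x),\ \tilde\pi_{eq}(f_1)=\tilde\pi_{eq}(f_2)=\zeta\}$.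 *)

From HB Require Import structures.
From mathcomp Require Import all_boot all_order all_algebra.
From mathcomp Require Import all_classical all_reals all_analysis.
Set Implicit Arguments. Unset Strict Implicit. Unset Printing Implicit Defensive.
Import Order.TTheory GRing.Theory Num.Theory.
Local Open Scope classical_set_scope.
Local Open Scope ring_scope.

Section Dyn.
Context {T : zmodType}.

Definition is_action {X : topologicalType} (sigma : T -> X -> X) : Prop :=
  [/\ (forall x, sigma 0 x = x),
      (forall s t x, sigma (s + t) x = sigma s (sigma t x)) &
      (forall t, continuous (sigma t))].

Definition minimal_action {X : topologicalType} (sigma : T -> X -> X) : Prop :=
  forall A : set X, closed A -> A !=set0 -> (forall t, sigma t @` A `<=` A) ->
    A = setT.

Definition proximal {X : uniformType} (sigma : T -> X -> X) (x y : X) : Prop :=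
  forall U, entourage U -> exists t, U (sigma t x, sigma t y).

Definition distal {X : uniformType} (sigma : T -> X -> X) : Prop :=
  forall x y, proximal sigma x y -> x = y.

Definition equicontinuous_action {Y : uniformType} (tau : T -> Y -> Y) : Prop :=
  forall U, entourage U -> exists V, entourage V /\
    forall t y y', V (y, y') -> U (tau t y, tau t y').

(* pi : X -> Xeq is the maximal equicontinuous factor, Xeq a compact
   (Hausdorff) abelian group on which T acts by rotation via chi *)
Definition is_max_eq_factor {X : uniformType} (sigma : T -> X -> X)
    (Xeq : topologicalZmodType) (pi : X -> Xeq) : Prop :=
  [/\ compact [set: Xeq] /\ hausdorff_space Xeq, continuous pi,
      (forall z : Xeq, exists x, pi x = z),
      (exists chi : T -> Xeq, (forall s t, chi (s + t) = chi s + chi t) /\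
          forall t x, pi (sigma t x) = pi x + chi t) &
      (forall (Y : uniformType) (tau : T -> Y -> Y) (p : X -> Y),
         compact [set: Y] -> hausdorff_space Y -> is_action tau ->
         equicontinuous_action tau -> continuous p ->
         (forall y : Y, exists x, p x = y) ->
         (forall t x, p (sigma t x) = tau t (p x)) ->
         exists g : Xeq -> Y, continuous g /\ forall x, p x = g (pi x))].

Definition ellis {X : topologicalType} (sigma : T -> X -> X) : set (X -> X) :=
  closure (range (fun t => (sigma t : {ptws X -> X}))).
End Dyn.

Section Semigroup.
Context {X : Type}.
Implicit Types (E I L : set (X -> X)) (f g e : X -> X).

Definition left_ideal E I : Prop :=
  [/\ I !=set0, I `<=` E & forall f g, E f -> I g -> I (f \o g)].

Definition minimal_left_ideal E I : Prop :=
  left_ideal E I /\ forall J, left_ideal E J -> J `<=` I -> J = I.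

Definition minimal_idempotent E e : Prop :=
  [/\ E e, e \o e = e & exists I, minimal_left_ideal E I /\ I e].

Definition left_mul E e : set (X -> X) := [set f \o e | f in E].

Definition normal_inverse L f g : Prop :=
  [/\ L g, f \o g \o f = f, g \o f \o g = g & f \o g = g \o f].

(* Green's relation R on L: f1^0 = f2^0 with f^0 = f^{-1} f *)
Definition greenR L f1 f2 : Prop :=
  exists g1 g2, [/\ normal_inverse L f1 g1, normal_inverse L f2 g2 &
                     g1 \o f1 = g2 \o f2].

Definition idempotents L : set (X -> X) := [set p | L p /\ p \o p = p].

Definition separates_idempotents L (x : X) : Prop :=
  forall p q, idempotents L p -> idempotents L q -> p x = q x -> p = q.
End Semigroup.

(* tilde pi_eq (f) = pi (f x) - pi x ; R^zeta_{ev_x} *)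
Definition R_ev {X : Type} {Xeq : zmodType} (L : set (X -> X)) (pi : X -> Xeq)
    (x : X) (zeta : Xeq) (f1 f2 : X -> X) : Prop :=
  [/\ L f1, L f2, f1 x = f2 x, pi (f1 x) - pi x = zeta & pi (f2 x) - pi x = zeta].

From HB Require Import structures.
From mathcomp Require Import all_boot all_order all_algebra.
From mathcomp Require Import all_classical all_reals all_analysis.
Import Order.TTheory GRing.Theory Num.Theory.
Local Open Scope classical_set_scope.
Local Open Scope ring_scope.

(* Each f in L has a normal inverse g, and g f is an idempotent of L fixing
   every point f y.  So if f1 x = f2 x, the idempotents g1 f1 and g2 f2 agree
   at f1 x, and f1, f2 are R-related as soon as f1 x separates idempotents;
   conversely, R-related idempotents are equal.  The map f |-> pi (f x) - pi x
   does not depend on x, since it is continuous on the pointwise closure of the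
   shifts sigma t, where it equals chi t; hence idempotents lie over 0, and
   f x lies over xi whenever f lies over xi - pi x. *)

Lemma closure_sub_closed {A : topologicalType} {S C : set A} :
  closed C -> S `<=` C -> closure S `<=` C.
Proof. by move=> cC SC; apply: subset_trans cC; exact: closureS. Qed.

Section EllisSemigroup.
Context {T : zmodType} {X : uniformType} (sigma : T -> X -> X).

Lemma eval_continuous (x : X) : continuous (fun h : {ptws X -> X} => h x).
Proof. exact: (@proj_continuous X (fun _ => X) x). Qed.

Lemma ptws_compr_continuous (g : X -> X) :
  continuous (fun h : {ptws X -> X} => (h \o g : {ptws X -> X})).
Proof.
move=> h; apply/(pointwise_cvgP _ (fmap_filter _ (nbhs_filter h))) => x.
exact: eval_continuous (g x) h.
Qed.

Lemma ptws_compl_continuous {f : X -> X} : continuous f ->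
  continuous (fun h : {ptws X -> X} => (f \o h : {ptws X -> X})).
Proof.
move=> cf h; apply/(pointwise_cvgP _ (fmap_filter _ (nbhs_filter h))) => x.
exact: (continuous_comp (eval_continuous x h) (cf (h x))).
Qed.

Lemma ellis_closed : closed (ellis sigma : set {ptws X -> X}).
Proof. exact: closed_closure. Qed.

Lemma ellis_min (C : set {ptws X -> X}) :
  closed C -> (forall t, C (sigma t)) -> ellis sigma `<=` C.
Proof. by move=> cC sC; apply: (closure_sub_closed cC) => _ [t _ <-]. Qed.

Lemma ellis_act t : ellis sigma (sigma t).
Proof. by apply: (@subset_closure {ptws X -> X}); exists t. Qed.

Lemma ellis_comp : is_action sigma ->
  forall f g, ellis sigma f -> ellis sigma g -> ellis sigma (f \o g).
Proof.
case=> _ sigmaD sigma_cont.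
have ellis_actl t :
    ellis sigma `<=` (fun h : {ptws X -> X} => sigma t \o h) @^-1` ellis sigma.
  apply: ellis_min => [|s].
  - exact: (preimage_closed (fun k _ => ptws_compl_continuous (sigma_cont t) k)
                              ellis_closed).
  - rewrite /preimage /=.
    have -> : sigma t \o sigma s = sigma (t + s) by apply/funext => x; rewrite sigmaD.
    exact: ellis_act.
move=> f g Ef Eg.
suff : ellis sigma `<=` (fun h : {ptws X -> X} => h \o g) @^-1` ellis sigma.
  by move/(_ f Ef).
apply: ellis_min => [|t].
- exact: (preimage_closed (fun k _ => ptws_compr_continuous g k) ellis_closed).
- exact: ellis_actl Eg.
Qed.
End EllisSemigroup.

Section EllisFactor.
Context {T : zmodType} {X : uniformType} {sigma : T -> X -> X}
  {Xeq : topologicalZmodType} (pi : X -> Xeq) {chi : T -> Xeq}.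
Hypotheses (Xeq_hausdorff : hausdorff_space Xeq) (pi_cont : continuous pi)
  (pi_sigma : forall t x, pi (sigma t x) = pi x + chi t).

Lemma ellis_pi_shift f x y : ellis sigma f -> pi (f x) - pi x = pi (f y) - pi y.
Proof.
pose Phi (h : {ptws X -> X}) := pi (h x) - pi (h y).
have Phi_cont : continuous Phi.
  move=> k; apply: (@continuous2_cvg _ _ _ _ _ (nbhs_filter k) _ _ (fun u v : Xeq => u - v)).
  - exact: (@sub_continuous Xeq (_, _)).
  - exact: continuous_comp (eval_continuous x k) (pi_cont _).
  - exact: continuous_comp (eval_continuous y k) (pi_cont _).
have : ellis sigma `<=` Phi @^-1` [set pi x - pi y].
  apply: ellis_min => [|t].
  - apply: preimage_closed => [h _|]; first exact: Phi_cont.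
    exact/accessible_closed_set1/hausdorff_accessible.
  - by rewrite /Phi /= !pi_sigma opprD addrACA subrr addr0.
move=> /[apply] /= /eqP; rewrite subr_eq => /eqP ->.
by rewrite addrAC [_ - pi y - _]addrAC subrr add0r addrC.
Qed.

Lemma ellis_idempotent_pi p x : ellis sigma p -> p \o p = p -> pi (p x) = pi x.
Proof.
move=> Ep pp; apply/eqP; rewrite -subr_eq0 (ellis_pi_shift _ x (p x) Ep).
by rewrite -[p (p x)]/((p \o p) x) pp subrr.
Qed.
End EllisFactor.

Section NormalInverse.
Context {X : Type} {L : set (X -> X)}.

Lemma normal_inverse_fix {f g} y : normal_inverse L f g -> g (f (f y)) = f y.
Proof. by case=> _ fgf _ fg; rewrite -[g (f _)]/((g \o f) _) -fg -[in RHS]fgf. Qed.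

Lemma idempotent_normal_inverse {p g} :
  p \o p = p -> normal_inverse L p g -> g \o p = p.
Proof. by move=> pp [_ pgp _ pg]; rewrite -{2}pgp pg -compA pp. Qed.

Lemma greenR_idempotent_eq {p q} :
  idempotents L p -> idempotents L q -> greenR L p q -> p = q.
Proof.
move=> [_ pp] [_ qq] [g1 [g2 [n1 n2 g1g2]]].
by rewrite -(idempotent_normal_inverse pp n1) -(idempotent_normal_inverse qq n2).
Qed.

End NormalInverse.

Section MinimalLeftIdeal.
Context {X : Type} {E : set (X -> X)} (E_comp : forall f g, E f -> E g -> E (f \o g)).
Context {e : X -> X} (e_min : minimal_idempotent E e).
Let L := left_mul E e.

Lemma left_mul_sub {f} : L f -> E f.
Proof. by case: e_min => Ee _ _ [g Eg <-]; exact: E_comp. Qed.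

Lemma left_mul_comp {f g} : E f -> L g -> L (f \o g).
Proof. by move=> Ef [h Eh <-]; exists (f \o h) => //; exact: E_comp. Qed.

Lemma left_mul_unit : L e.
Proof. by case: e_min => Ee ee _; exists e. Qed.

Lemma left_mul_compe {f} : L f -> f \o e = f.
Proof. by case: e_min => _ ee _ [g _ <-]; rewrite -compA ee. Qed.

(* L is a minimal left ideal, hence equal to the left ideal L a for a in L. *)
Lemma left_mul_solve {a b} : L a -> L b -> exists2 k, L k & k \o a = b.
Proof.
case: e_min => _ _ [I [[[_ _ Icomp] Imin] Ie]] La Lb.
have L_ideal : left_ideal E L.
  by split; [exists e; exact: left_mul_unit | exact: @left_mul_sub |
             move=> f g Ef; exact: left_mul_comp].
have LI : L = I by apply: Imin => // _ [f Ef <-]; exact: Icomp Ef Ie.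
pose La' := [set k \o a | k in L].
have La'_ideal : left_ideal E La'.
  split.
  - by exists (e \o a), e => //; exact: left_mul_unit.
  - by move=> _ [k Lk <-]; apply: E_comp; exact: left_mul_sub.
  - by move=> f _ Ef [k Lk <-]; exists (f \o k) => //; exact: left_mul_comp.
have La'I : La' = I.
  by apply: Imin => // _ [k Lk <-]; rewrite -LI; exact: left_mul_comp (left_mul_sub Lk) La.
have : La' b by rewrite La'I -LI.
by case=> k Lk <-; exists k.
Qed.

Lemma normal_inverse_exists {f} : L f -> exists g, normal_inverse L f g.
Proof.
(* f h is an idempotent left unit of f, and k is built so that f k = k f = f h. *)
move=> Lf; have [h Lh hf] := left_mul_solve Lf left_mul_unit.
have Lu : L (f \o h) := left_mul_comp (left_mul_sub Lf) Lh.
have uf : f \o h \o f = f by rewrite -compA hf left_mul_compe.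
have uu : (f \o h) \o (f \o h) = f \o h by rewrite compA uf.
have [k0 Lk0 k0f] := left_mul_solve Lf Lu.
pose k := f \o h \o k0.
have Lk : L k := left_mul_comp (left_mul_sub Lu) Lk0.
have uk : (f \o h) \o k = k by rewrite /k compA uu.
have kf : k \o f = f \o h by rewrite /k -compA k0f uu.
have [k2 _ k2k] := left_mul_solve Lk Lu.
have fk : f \o k = f \o h.
  transitivity (k2 \o (k \o f) \o k); last by rewrite kf -compA uk k2k.
  by rewrite -[in LHS]uf -[in LHS]k2k.
by exists k; split; rewrite ?fk ?kf ?uf ?uk.
Qed.

Lemma normal_inverse_idempotent {f g} :
  L f -> normal_inverse L f g -> idempotents L (g \o f).
Proof.
move=> Lf [Lg _ gfg _]; split; last by rewrite compA gfg.
exact: left_mul_comp (left_mul_sub Lg) Lf.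
Qed.

Lemma greenR_of_separates {f1 f2 x} : L f1 -> L f2 -> f1 x = f2 x ->
  separates_idempotents L (f1 x) -> greenR L f1 f2.
Proof.
move=> Lf1 Lf2 f12 sep.
have [g1 n1] := normal_inverse_exists Lf1.
have [g2 n2] := normal_inverse_exists Lf2.
exists g1, g2; split => //; apply: sep; try exact: normal_inverse_idempotent.
by rewrite /= (normal_inverse_fix _ n1) {2}f12 (normal_inverse_fix _ n2).
Qed.
End MinimalLeftIdeal.

Theorem mainTheorem6 (T : zmodType) (X : uniformType) (sigma : T -> X -> X)
    (Xeq : topologicalZmodType) (pi : X -> Xeq) (e : X -> X) (xi : Xeq) :
  compact [set: X] -> hausdorff_space X ->
  is_action sigma -> minimal_action sigma -> ~ distal sigma ->
  is_max_eq_factor sigma pi ->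
  minimal_idempotent (ellis sigma) e ->
  let L := left_mul (ellis sigma) e in
  ((forall x, pi x = xi -> separates_idempotents L x) <->
   (forall x f1 f2, R_ev L pi x (xi - pi x) f1 f2 -> greenR L f1 f2)) /\
  ((forall x f1 f2, R_ev L pi x (xi - pi x) f1 f2 -> greenR L f1 f2) <->
   (forall x, pi x = xi -> forall f1 f2, R_ev L pi x 0 f1 f2 -> greenR L f1 f2)).
Proof.
move=> _ _ act _ _ [[_ Xeq_T2] pi_cont _ [chi [_ pi_sigma]] _] e_min L.
have E_comp := ellis_comp sigma act.
have idempotent_pi p y : idempotents L p -> pi (p y) = pi y.
  case=> /(left_mul_sub E_comp e_min) Ep pp.
  exact: (ellis_idempotent_pi pi Xeq_T2 pi_cont pi_sigma p y Ep pp).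
have idempotents_R_ev0 y p q :
    idempotents L p -> idempotents L q -> p y = q y -> R_ev L pi y 0 p q.
  move=> Ip Iq pqy; split => //; [case: Ip | case: Iq | |] => //;
  by rewrite idempotent_pi ?subrr.
split; split.
- move=> sep x f1 f2 [Lf1 Lf2 f12 /subIr pif1 _].
  exact: (greenR_of_separates E_comp e_min Lf1 Lf2 f12 (sep _ pif1)).
- move=> green x pix p q Ip Iq pqx.
  apply: (greenR_idempotent_eq Ip Iq); apply: (green x).
  by rewrite pix subrr; exact: (idempotents_R_ev0 x p q Ip Iq pqx).
- by move=> green x pix f1 f2; have := green x f1 f2; rewrite pix subrr.
- move=> green x f1 f2 [Lf1 Lf2 f12 /subIr pif1 _].
  apply: (greenR_of_separates E_comp e_min Lf1 Lf2 f12) => p q Ip Iq pq.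
  apply: (greenR_idempotent_eq Ip Iq).
  exact: (green _ pif1 p q (idempotents_R_ev0 _ _ _ Ip Iq pq)).
Qed.
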